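(* Let $\mathbb F$ be a field of odd characteristic or of characteristic $0$, and let $\overline{\mathbb F}$ be an algebraically closed field containing $\mathbb F[i]$, where $i^2=-1$. Let $r_1,r_2\in\mathbb F$, and for $j=1,2$ let $C_j$ be the line complex in $\mathbb P^3(\overline{\mathbb F})$ defined by the hyperplane $\mathcal H_j=\{\boldsymbol N_j\cdot\boldsymbol P=0\}$, where $$\boldsymbol N_j=[2r_j:-1:0:0:1:0].$$ Let $S$ be a doubly-ruled quadric surface in $\mathbb P^3(\overline{\mathbb F})$, and suppose one of its rulings contains three distinct lines of $C_1$. Then the complementary ruling of $S$ contains at most two lines of $C_2$. The same holds with the roles of $C_1$ and $C_2$ interchanged.
   Context: Plücker coordinates: a line through two distinct points $(x_0:\dots:x_3)$ and $(y_0:\dots:y_3)$ of $\mathbb P^3$ has Plücker vector $$\boldsymbol P=[P_{01}:P_{02}:P_{03}:P_{23}:P_{31}:P_{12}]=[\boldsymbol\omega:\boldsymbol v],\qquad P_{ij}=x_iy_j-x_jy_i.$$ The Klein quadric is $\mathcal K=\{\boldsymbol\omega\cdot\boldsymbol v=0\}$. The line complex $C_j$ is the set of lines whose Plücker vectors lie in $\mathcal K\cap\mathcal H_j$. It is regular because $\boldsymbol N_j\notin\mathcal K$. Its lines include, for each $(x,y,z)$, the line with Plücker vector $$[1:r_j-z:x-iy:r_j^2-x^2-y^2-z^2:-(z+r_j):x+iy].$$ The rulings of a doubly-ruled quadric are reguli: sets of lines whose Plücker vectors form the transverse intersection of $\mathcal K$ with a two-plane in $\mathbb P^5$. *)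

From HB Require Import structures.
From mathcomp Require Import all_boot all_order all_algebra all_field.
Set Implicit Arguments. Unset Strict Implicit. Unset Printing Implicit Defensive.
Import Order.TTheory GRing.Theory Num.Theory.
Local Open Scope ring_scope.

(* Points of P^3(K): nonzero row vectors 'rV[K]_4 (up to scaling).
   Lines of P^3(K): 2x4 matrices of rank 2; the line is the (projectivised)
   row space, two matrices L, M denote the same line iff (L == M)%MS. *)

Definition is_line (K : fieldType) (L : 'M[K]_(2,4)) : Prop := \rank L = 2%N.

Definition point_on_line (K : fieldType) (x : 'rV[K]_4) (L : 'M[K]_(2,4)) : Prop :=
  x != 0 /\ (x <= L)%MS.

Definition same_line (K : fieldType) (L M : 'M[K]_(2,4)) : Prop := (L == M)%MS.

Definition pl (K : fieldType) (L : 'M[K]_(2,4)) (i j : nat) : K :=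
  L 0 (inord i) * L 1 (inord j) - L 0 (inord j) * L 1 (inord i).

Definition plucker (K : fieldType) (L : 'M[K]_(2,4)) : 'rV[K]_6 :=
  \row_(k < 6) nth 0 [:: pl L 0 1; pl L 0 2; pl L 0 3;
                          pl L 2 3; pl L 3 1; pl L 1 2] k.

Definition Nvec (K : fieldType) (r : K) : 'rV[K]_6 :=
  \row_(k < 6) nth 0 [:: 2 * r; -1; 0; 0; 1; 0] k.

Definition dot6 (K : fieldType) (u v : 'rV[K]_6) : K := \sum_(k < 6) u 0 k * v 0 k.

Definition in_complex (K : fieldType) (r : K) (L : 'M[K]_(2,4)) : Prop :=
  is_line L /\ dot6 (Nvec r) (plucker L) = 0.

(* A quadric surface in P^3(K): zero set of the quadratic form x Q x^T with
   Q a nonzero symmetric 4x4 matrix. *)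
Definition quadric_surface (K : fieldType) (Q : 'M[K]_4) : Prop :=
  Q^T = Q /\ Q != 0.

Definition point_on_quadric (K : fieldType) (Q : 'M[K]_4) (x : 'rV[K]_4) : Prop :=
  x != 0 /\ (x *m Q *m x^T) 0 0 = 0.

Definition line_in_quadric (K : fieldType) (Q : 'M[K]_4) (L : 'M[K]_(2,4)) : Prop :=
  is_line L /\ forall x : 'rV[K]_4, (x <= L)%MS -> (x *m Q *m x^T) 0 0 = 0.

Definition ruling (K : fieldType) (Q : 'M[K]_4) (R : 'M[K]_(2,4) -> Prop) : Prop :=
  [/\ forall L, R L -> line_in_quadric Q L,
      forall x, point_on_quadric Q x -> exists L, R L /\ point_on_line x L
    & forall x L M, R L -> R M -> point_on_line x L -> point_on_line x M ->
        same_line L M].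

Definition complementary (K : fieldType) (R1 R2 : 'M[K]_(2,4) -> Prop) : Prop :=
  forall L M, R1 L -> R2 M -> ~ same_line L M.

Definition doubly_ruled (K : fieldType) (Q : 'M[K]_4) : Prop :=
  quadric_surface Q /\
  exists R1 R2, [/\ ruling Q R1, ruling Q R2 & complementary R1 R2].

Definition three_lines_of (K : fieldType) (R : 'M[K]_(2,4) -> Prop) (r : K) : Prop :=
  exists L1 L2 L3, [/\ R L1 /\ in_complex r L1, R L2 /\ in_complex r L2,
                       R L3 /\ in_complex r L3 &
                       [/\ ~ same_line L1 L2, ~ same_line L1 L3 & ~ same_line L2 L3]].

Definition at_most_two_lines_of (K : fieldType) (R : 'M[K]_(2,4) -> Prop) (r : K) : Prop :=
  forall L1 L2 L3, R L1 -> in_complex r L1 -> R L2 -> in_complex r L2 ->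
    R L3 -> in_complex r L3 ->
    [\/ same_line L1 L2, same_line L1 L3 | same_line L2 L3].

(* Identify a line with its Plücker vector.  The polar form K of the Klein quadric
   satisfies K(P_L, P_M) = det [L; M], which vanishes exactly when L and M meet.  Two distinct
   lines of one ruling never meet, while every line of a ruling meets every line of the
   complementary ruling: otherwise the quadric would contain a plane, and no ruled quadric
   does.  So the Plücker vectors of three lines of R1 span a plane Pi1 of P^5 on which K is
   nondegenerate (its Gram matrix is hollow with determinant 2abc), three lines of R2 span
   such a plane Pi2, and Pi1 is K-orthogonal to Pi2; hence P^5 = Pi1 + Pi2.  The hyperplane
   H_j is the K-orthogonal of the pole N_j' (N_j with its two halves swapped).  Three lines
   of R1 in C1 force N_1' to be orthogonal to Pi1, hence to lie in Pi2; three lines of R2 in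
   C2 would force N_2' to be orthogonal to Pi2, so K(N_1', N_2') = 0.  But it equals -2. *)

From HB Require Import structures.
From mathcomp Require Import all_boot all_order all_algebra all_field.
From mathcomp Require Import ring.
Import GRing.Theory.
Local Open Scope ring_scope.
Set Implicit Arguments. Unset Strict Implicit. Unset Printing Implicit Defensive.

Lemma mulmx_trE (K : fieldType) m n p (X : 'M[K]_(m, n)) (M : 'M_n) (Y : 'M_(p, n)) i j :
  (X *m M *m Y^T) i j = (row i X *m M *m (row j Y)^T) 0 0.
Proof. by rewrite -!row_mul !mxE; apply: eq_bigr => k _; rewrite !mxE. Qed.

Lemma forall_ord3 (T : Type) (P : T -> Prop) (x0 a b c : T) :
  P a -> P b -> P c -> forall i : 'I_3, P (nth x0 [:: a; b; c] i).
Proof. by move=> Pa Pb Pc [[|[|[|//]]] ?]. Qed.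

Section NatMatrix.
Variable K : fieldType.

(* Entries given by a function on nat keep the minors first order, so that the Laplace
   expansion [det_nat_mx] can be iterated by rewriting. *)
Definition nat_mx n (f : nat -> nat -> K) : 'M[K]_n := \matrix_(i, j) f i j.
Arguments nat_mx : simpl never.

Lemma det_nat_mx n (f : nat -> nat -> K) :
  \det (nat_mx n.+1 f) =
  \sum_(j < n.+1) f 0%N j * (-1) ^+ j * \det (nat_mx n (fun i k => f i.+1 (bump j k))).
Proof.
rewrite (expand_det_row _ ord0); apply: eq_bigr => j _.
rewrite mxE /cofactor add0n -mulrA; congr (_ * (_ * _)).
by congr (\det _); apply/matrixP => i k; rewrite !mxE.
Qed.

Lemma det_hollow3 (G : 'M[K]_3) : G^T = G -> (forall i, G i i = 0) ->
  \det G = 2 * G 0 1 * G 0 2 * G 1 2.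
Proof.
move=> sG dG; have GE : G = nat_mx 3 (fun i j => G (inord i) (inord j)).
  by apply/matrixP => i j; rewrite mxE !inord_val.
have sGE i j : G i j = G j i by rewrite -[in LHS]sG mxE.
have e0 : inord 0 = 0 :> 'I_3 by apply/val_inj; rewrite /= inordK.
have e1 : inord 1 = 1 :> 'I_3 by apply/val_inj; rewrite /= inordK.
have e2 : inord 2 = 2 :> 'I_3 by apply/val_inj; rewrite /= inordK.
rewrite {1}GE; do 3 rewrite !det_nat_mx !big_ord_recl !big_ord0 /=.
rewrite det_mx00 /bump /= e0 e1 e2 !dG (sGE 1 0) (sGE 2 0) (sGE 2 1).
ring.
Qed.

Lemma col_mx_nat_mx (L M : 'M[K]_(2, 4)) : col_mx L M =
  nat_mx 4 (fun i j => if (i < 2)%N then L (inord i) (inord j) else M (inord (i - 2)) (inord j)).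
Proof.
apply/matrixP => i j; rewrite [RHS]mxE inord_val.
case: (splitP i) => k ik.
  have -> : i = lshift 2 k by exact: val_inj.
  by rewrite col_mxEu /= inord_val.
have -> : i = rshift 2 k by exact: val_inj.
by rewrite col_mxEd /= addKn inord_val.
Qed.

End NatMatrix.

Section Gram.
Variable K : fieldType.

Lemma unitmx_hollow3 (G : 'M[K]_3) : (2 : K) != 0 -> G^T = G -> (forall i, G i i = 0) ->
  G 0 1 != 0 -> G 0 2 != 0 -> G 1 2 != 0 -> G \in unitmx.
Proof.
by move=> h2 sG dG g01 g02 g12; rewrite unitmxE det_hollow3 // unitfE !mulf_neq0.
Qed.

Lemma form_eq0_of_orthogonal_sum p q (J : 'M[K]_(p + q))
    (A : 'M_(p, p + q)) (B : 'M_(q, p + q)) (u v : 'rV_(p + q)) :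
  J^T = J -> A *m J *m A^T \in unitmx -> B *m J *m B^T \in unitmx ->
  A *m J *m B^T = 0 -> u *m J *m A^T = 0 -> B *m J *m v^T = 0 -> u *m J *m v^T = 0.
Proof.
move=> sJ uA uB oAB ouA oBv.
(* col_mx A B is invertible, and u, being orthogonal to A, is a combination of the rows of B. *)
have oBA : B *m J *m A^T = 0.
  by apply: trmx_inj; rewrite !trmx_mul trmxK sJ mulmxA oAB trmx0.
set C := col_mx A B.
have gramC : C *m J *m C^T = block_mx (A *m J *m A^T) 0 0 (B *m J *m B^T).
  by rewrite tr_col_mx mul_col_mx mul_col_row oAB oBA.
have uC : C \in unitmx.
  have : C *m J *m C^T \in unitmx.
    by rewrite gramC unitmxE det_ublock unitrM -!unitmxE uA uB.
  by rewrite !unitmx_mul => /andP [/andP []].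
pose c := u *m invmx C.
have uE : u = lsubmx c *m A + rsubmx c *m B by rewrite -mul_row_col hsubmxK mulmxKV.
have c10 : lsubmx c = 0.
  apply: (row_free_inj (_ : row_free (A *m J *m A^T))); first by rewrite row_free_unit.
  rewrite mul0mx -ouA uE !mulmxDl -!(mulmxA (rsubmx c)) oBA mulmx0 addr0.
  by rewrite !mulmxA.
by rewrite uE c10 mul0mx add0r -!(mulmxA (rsubmx c)) oBv mulmx0.
Qed.

End Gram.

Section SymmetricForm.
Variables (K : fieldType) (n : nat) (Q : 'M[K]_n).
Hypotheses (sQ : Q^T = Q) (h2 : (2 : K) != 0).

Lemma form_sym (x y : 'rV[K]_n) : x *m Q *m y^T = y *m Q *m x^T.
Proof.
have tr11 (A : 'M[K]_1) : A^T = A by rewrite [A]mx11_scalar tr_scalar_mx.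
by rewrite -[LHS]tr11 !trmx_mul trmxK sQ mulmxA.
Qed.

Lemma form_eq0_polar (x y : 'rV[K]_n) :
  x *m Q *m x^T = 0 -> y *m Q *m y^T = 0 -> (x + y) *m Q *m (x + y)^T = 0 ->
  x *m Q *m y^T = 0.
Proof.
move=> hx hy; rewrite linearD /= !mulmxDl !mulmxDr hx hy (form_sym y x) add0r addr0.
set b := x *m Q *m y^T => b2; have : (2 : K) *: b = 0 by rewrite scaler_nat mulr2n.
by move/eqP; rewrite scalemx_eq0 (negbTE h2) => /eqP.
Qed.

Lemma isotropicP m (V : 'M[K]_(m, n)) :
  (forall x : 'rV_n, (x <= V)%MS -> (x *m Q *m x^T) 0 0 = 0) -> V *m Q *m V^T = 0.
Proof.
move=> hV; apply/matrixP => i j; rewrite mulmx_trE.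
have iso (x : 'rV_n) : (x <= V)%MS -> x *m Q *m x^T = 0.
  by move=> xV; apply/matrixP => a b; rewrite !ord1 hV // mxE.
by rewrite (form_eq0_polar (iso _ (row_sub i V)) (iso _ (row_sub j V))) ?mxE //;
  apply/iso/addmx_sub; apply: row_sub.
Qed.

Lemma isotropic_sub m p1 p2 (V : 'M[K]_(m, n)) (X : 'M_(p1, n)) (Y : 'M_(p2, n)) :
  V *m Q *m V^T = 0 -> (X <= V)%MS -> (Y <= V)%MS -> X *m Q *m Y^T = 0.
Proof.
move=> isoV /submxP [a ->] /submxP [b ->].
by rewrite trmx_mul !mulmxA -(mulmxA a) -(mulmxA a) isoV mulmx0 mul0mx.
Qed.

Lemma isotropic_col_mx m1 m2 (A : 'M[K]_(m1, n)) (B : 'M_(m2, n)) :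
  A *m Q *m A^T = 0 -> A *m Q *m B^T = 0 -> B *m Q *m B^T = 0 ->
  col_mx A B *m Q *m (col_mx A B)^T = 0.
Proof.
move=> isoA oAB isoB; have oBA : B *m Q *m A^T = 0.
  by apply: trmx_inj; rewrite !trmx_mul trmxK sQ mulmxA oAB trmx0.
by rewrite tr_col_mx mul_col_mx mul_col_row isoA oAB oBA isoB block_mx0.
Qed.

End SymmetricForm.

Lemma mxrank_col_mx_notin (K : fieldType) m n (A : 'M[K]_(m, n)) (z : 'rV_n) :
  ~~ (z <= A)%MS -> \rank (col_mx A z) = (\rank A).+1.
Proof.
move=> zA; apply/eqP; rewrite eqn_leq; apply/andP; split.
  rewrite -addsmxE; apply: leq_trans (mxrank_adds_leqif A z).1 _.
  by rewrite rank_rV -[X in (_ <= X)%N]addn1 leq_add2l leq_b1.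
have : (A < col_mx A z)%MS by rewrite ltmxE -addsmxE addsmxSl col_mx_sub (negbTE zA) andbF.
by rewrite ltmxErank => /andP [].
Qed.

Section Hyperplane.
Variables (K : fieldType) (n m : nat) (Q : 'M[K]_n.+1) (P : 'M[K]_(m, n.+1)).
Hypotheses (sQ : Q^T = Q) (rP : \rank P = n).

Lemma hyperplane_annihilator_eq0 p (z : 'rV_n.+1) (U : 'M_(n.+1, p)) :
  ~~ (z <= P)%MS -> P *m U = 0 -> z *m U = 0 -> U = 0.
Proof.
move=> zP PU zU; have /row_fullP [B BK] : row_full (col_mx P z).
  by rewrite /row_full mxrank_col_mx_notin // rP.
by rewrite -[U]mul1mx -BK -mulmxA mul_col_mx PU zU col_mx0 mulmx0.
Qed.

Lemma isotropic_sub_hyperplane k (L : 'M_(k, n.+1)) (y : 'rV_n.+1) :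
  P *m Q *m P^T = 0 -> L *m Q *m L^T = 0 -> (y <= L)%MS -> (y <= P)%MS -> y *m Q != 0 ->
  (L <= P)%MS.
Proof.
move=> isoP isoL yL yP; apply: contraR => /row_subPn [i ziP].
have QyT : Q *m y^T = 0.
  apply: (hyperplane_annihilator_eq0 ziP); rewrite mulmxA.
    exact: isotropic_sub isoP (submx_refl P) yP.
  exact: isotropic_sub isoL (row_sub i L) yL.
by apply/eqP; rewrite -sQ -[y]trmxK -trmx_mul QyT trmx0.
Qed.

Lemma isotropic_sub_singular_hyperplane k (L : 'M_(k, n.+1)) :
  P *m Q = 0 -> Q != 0 -> L *m Q *m L^T = 0 -> (L <= P)%MS.
Proof.
move=> PQ Q0 isoL; apply: contraR Q0 => /row_subPn [i ziP]; apply/eqP.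
apply: (hyperplane_annihilator_eq0 ziP PQ).
have QzT : Q *m (row i L)^T = 0.
  apply: (hyperplane_annihilator_eq0 ziP); rewrite mulmxA ?PQ ?mul0mx //.
  exact: isotropic_sub isoL (row_sub i L) (row_sub i L).
by rewrite -sQ -[row i L]trmxK -trmx_mul QzT trmx0.
Qed.

End Hyperplane.

Lemma det_col_mx_eq0 (K : fieldType) (L M : 'M[K]_(2, 4)) : is_line L -> is_line M ->
  (\det (col_mx L M) == 0) = (L :&: M != 0)%MS.
Proof.
move=> lL lM; have := mxrank_sum_cap L M; rewrite lL lM => rk.
rewrite -[\det _ == 0]negbK -unitfE -unitmxE -row_free_unit /row_free -addsmxE.
rewrite -[X in _ != X]rk -mxrank_eq0.
by rewrite -{1}[\rank (L + M)%MS]addn0 eqn_add2l eq_sym.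
Qed.

Lemma det_col_mx_sub_eq0 (K : fieldType) m (P : 'M[K]_(m, 4)) (L M : 'M_(2, 4)) :
  (\rank P < 4)%N -> (L <= P)%MS -> (M <= P)%MS -> \det (col_mx L M) = 0.
Proof.
move=> rP LP MP; apply/eqP; rewrite -[_ == 0]negbK -unitfE -unitmxE -row_free_unit.
apply: contraL rP; rewrite /row_free -leqNgt => /eqP rk.
apply: (@leq_trans (\rank (col_mx L M))); first by rewrite rk.
by apply: mxrankS; rewrite col_mx_sub LP.
Qed.

Section Ruling.
Variables (K : fieldType) (Q : 'M[K]_4) (R : 'M[K]_(2, 4) -> Prop).
Hypotheses (hR : ruling Q R) (sQ : Q^T = Q) (h2 : (2 : K) != 0).

Lemma ruling_line L : R L -> is_line L.
Proof. by case: hR => lines _ _ /lines [lL _]. Qed.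

Lemma ruling_isotropic L : R L -> L *m Q *m L^T = 0.
Proof. by case: hR => lines _ _ /lines [_ iso]; apply: isotropicP. Qed.

Lemma ruling_same_line L M : R L -> R M -> \det (col_mx L M) = 0 -> same_line L M.
Proof.
move=> RL RM /eqP; rewrite (det_col_mx_eq0 (ruling_line RL) (ruling_line RM)).
move=> /rowV0Pn [x]; rewrite sub_capmx => /andP [xL xM] xn0.
by case: hR => _ _ uniq; apply: uniq x L M RL RM (conj xn0 xL) (conj xn0 xM).
Qed.

Lemma ruling_lines_in_plane m (P : 'M[K]_(m, 4)) L M : \rank P = 3 ->
  R L -> R M -> (L <= P)%MS -> (M <= P)%MS -> same_line L M.
Proof.
move=> rP RL RM LP MP; apply: ruling_same_line => //.
by apply: (det_col_mx_sub_eq0 _ LP MP); rewrite rP.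
Qed.

Lemma ruling_no_isotropic_plane m (P : 'M[K]_(m, 4)) :
  Q != 0 -> \rank P = 3 -> P *m Q *m P^T = 0 -> False.
Proof.
move=> Q0 rP isoP.
(* A line of R through y in P lies in P if y is a smooth point of the quadric, or if all of P
   is singular; but two lines of R in one plane coincide. *)
have line_through (y : 'rV_4) : (y <= P)%MS -> y != 0 -> exists2 L, R L & (y <= L)%MS.
  move=> yP y0; have yQy : (y *m Q *m y^T) 0 0 = 0 by rewrite (isotropic_sub isoP yP yP) mxE.
  by case: hR => _ /(_ y (conj y0 yQy)) [L [RL [_ yL]]] _; exists L.
have off_line L : R L -> exists2 w : 'rV_4, (w <= P)%MS & ~~ (w <= L)%MS.
  move=> RL; suff /row_subPn [i wL] : ~~ (P <= L)%MS by exists (row i P); rewrite ?row_sub.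
  by apply: contraTN isT => /mxrankS; rewrite rP (ruling_line RL).
have two_lines L L' (y' : 'rV_4) : R L -> R L' -> (L <= P)%MS -> (L' <= P)%MS ->
    (y' <= L')%MS -> ~~ (y' <= L)%MS -> False.
  move=> RL RL' LP L'P y'L' /negP; apply; apply: submx_trans y'L' _.
  by case/andP: (ruling_lines_in_plane rP RL RL' LP L'P).
have [PQ | PQ] := eqVneq (P *m Q) 0.
  have inP L : R L -> (L <= P)%MS.
    by move=> RL; apply: (isotropic_sub_singular_hyperplane (n := 3)) (ruling_isotropic RL).
  have /rowV0Pn [y yP y0] : P != 0 by rewrite -mxrank_eq0 rP.
  have [L RL yL] := line_through y yP y0; have [w wP wL] := off_line L RL.
  have w0 : w != 0 by apply: contraNneq wL => ->; rewrite sub0mx.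
  have [L' RL' wL'] := line_through w wP w0.
  exact: two_lines L L' w RL RL' (inP L RL) (inP L' RL') wL' wL.
have inP (y : 'rV_4) L : (y <= P)%MS -> y *m Q != 0 -> R L -> (y <= L)%MS -> (L <= P)%MS.
  move=> yP yQ RL yL.
  exact: (isotropic_sub_hyperplane (n := 3) sQ rP isoP (ruling_isotropic RL) yL yP yQ).
have /rowV0Pn [_ /submxP [a ->]] := PQ; rewrite mulmxA; set y := a *m P => yQ.
have yP : (y <= P)%MS by exact: submxMl.
have y0 : y != 0 by apply: contraNneq yQ => ->; rewrite mul0mx.
have [L RL yL] := line_through y yP y0; have [w wP wL] := off_line L RL.
have [y' [y'P y'Q] y'L] : exists2 y' : 'rV_4, (y' <= P)%MS /\ y' *m Q != 0 & ~~ (y' <= L)%MS.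
  have [wQ | wQ] := eqVneq (w *m Q) 0; last by exists w.
  exists (y + w); first by rewrite addmx_sub // mulmxDl wQ addr0.
  apply: contra wL => ywL; have -> : w = (y + w) - y by rewrite addrC addKr.
  by rewrite addmx_sub // eqmx_opp.
have y'0 : y' != 0 by apply: contraNneq y'Q => ->; rewrite mul0mx.
have [L' RL' y'L'] := line_through y' y'P y'0.
exact: two_lines L L' y' RL RL' (inP y L yP yQ RL yL) (inP y' L' y'P y'Q RL' y'L') y'L' y'L.
Qed.

End Ruling.

Lemma complementary_not_sub (K : fieldType) (Q : 'M[K]_4) R1 R2 L M :
  ruling Q R1 -> ruling Q R2 -> complementary R1 R2 -> R1 L -> R2 M -> ~~ (M <= L)%MS.
Proof.
move=> hR1 hR2 hc RL RM; apply/negP => ML; apply: (hc L M RL RM); apply/andP; split => //.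
by have [_ <-] := mxrank_leqif_sup ML; rewrite (ruling_line hR1 RL) (ruling_line hR2 RM).
Qed.

(* If L and M were skew, take x on L, the line M' of R2 through x, and v on M' off L.
   Writing v = l + m with l on L and m on M, the plane spanned by x, l, m is isotropic. *)
Lemma complementary_rulings_meet (K : fieldType) (Q : 'M[K]_4) R1 R2 L M :
  (2 : K) != 0 -> Q^T = Q -> Q != 0 -> ruling Q R1 -> ruling Q R2 -> complementary R1 R2 ->
  R1 L -> R2 M -> \det (col_mx L M) = 0.
Proof.
move=> h2 sQ Q0 hR1 hR2 hc RL RM; apply/eqP/negPn/negP => skew.
have lL := ruling_line hR1 RL; have lM := ruling_line hR2 RM.
have isoL := ruling_isotropic hR1 sQ h2 RL; have isoM := ruling_isotropic hR2 sQ h2 RM.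
have LM0 (u : 'rV_4) : (u <= L)%MS -> (u <= M)%MS -> u = 0.
  move: skew; rewrite (det_col_mx_eq0 lL lM) negbK => /eqP capLM uL uM.
  by apply/eqP; rewrite -submx0 -capLM sub_capmx uL.
have /rowV0Pn [x xL x0] : L != 0 by rewrite -mxrank_eq0 lL.
have xQx : (x *m Q *m x^T) 0 0 = 0 by rewrite (isotropic_sub isoL xL xL) mxE.
have [M' [RM' [_ xM']]] : exists M', R2 M' /\ point_on_line x M'.
  by case: hR2 => _ /(_ x (conj x0 xQx)).
have isoM' := ruling_isotropic hR2 sQ h2 RM'.
have /row_subPn [i vL] := complementary_not_sub hR1 hR2 hc RL RM'.
set v := row i M' in vL; have vM' : (v <= M')%MS by exact: row_sub.
have /sub_addsmxP [[a b] /= vE] : (v <= L + M)%MS.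
  by rewrite addsmxE submx_full // row_full_unit unitmxE unitfE.
set l := a *m L in vE; set m := b *m M in vE.
have lL' : (l <= L)%MS by exact: submxMl.
have mM : (m <= M)%MS by exact: submxMl.
have m0 : m != 0 by apply: contraNneq vL => m0; rewrite vE m0 addr0 submxMl.
have mL : ~~ (m <= L)%MS by apply: contraNN m0 => mL; apply/eqP; exact: LM0 mL mM.
have mE : m = v - l by rewrite vE addrAC subrr add0r.
have lx : ~~ (l <= x)%MS.
  apply/negP => lx; have mM' : (m <= M')%MS.
    by rewrite mE addmx_sub // eqmx_opp (submx_trans lx xM').
  have /andP [M'M _] : same_line M' M.
    by case: hR2 => _ _ uniq; exact: uniq m M' M RM' RM (conj m0 mM') (conj m0 mM).
  by case/eqP: x0; apply: LM0 xL (submx_trans xM' M'M).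
have xQm : x *m Q *m m^T = 0.
  by rewrite mE linearB /= mulmxBr (isotropic_sub isoM' xM' vM') (isotropic_sub isoL xL lL') subr0.
have lQm : l *m Q *m m^T = 0.
  apply: (form_eq0_polar sQ h2 (isotropic_sub isoL lL' lL') (isotropic_sub isoM mM mM)).
  by rewrite -vE (isotropic_sub isoM' vM' vM').
have rP : \rank (col_mx (col_mx x l) m) = 3.
  rewrite !mxrank_col_mx_notin ?rank_rV ?x0 //.
  by apply: contra mL => /submx_trans; apply; rewrite col_mx_sub xL.
apply: (ruling_no_isotropic_plane hR1 sQ h2 Q0 rP).
apply: (isotropic_col_mx sQ); last exact: (isotropic_sub isoM mM mM).
  by apply: (isotropic_sub isoL); rewrite col_mx_sub xL.
by rewrite mul_col_mx mul_col_mx xQm lQm col_mx0.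
Qed.

Section Klein.
Context {K : fieldType}.

(* Gram matrix of the polar form of the Klein quadric [w . v = 0], in coordinates [w : v]. *)
Definition klein_mx : 'M[K]_6 := \matrix_(i, j) ((i + 3 == j)%N || (j + 3 == i)%N)%:R.

Lemma klein_mx_sym : klein_mx^T = klein_mx.
Proof. by apply/matrixP => i j; rewrite !mxE orbC. Qed.

Lemma klein_mxK : klein_mx *m klein_mx = 1%:M.
Proof.
apply/matrixP => i j; rewrite !(mxE, big_ord_recl, big_ord0) /=.
case: i j => [[|[|[|[|[|[|//]]]]]] ?] [[|[|[|[|[|[|//]]]]]] ?] /=; ring.
Qed.

Lemma plucker_klein_det (L M : 'M[K]_(2, 4)) :
  (plucker L *m klein_mx *m (plucker M)^T) 0 0 = \det (col_mx L M).
Proof.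
rewrite col_mx_nat_mx; do 4 rewrite !det_nat_mx !big_ord_recl !big_ord0 /=.
rewrite det_mx00 !(mxE, big_ord_recl, big_ord0) /= /pl.
have e0 : inord 0 = 0 :> 'I_2 by apply/val_inj; rewrite /= inordK.
have e1 : inord 1 = 1 :> 'I_2 by apply/val_inj; rewrite /= inordK.
rewrite e0 e1; ring.
Qed.

(* [Nvec r *m klein_mx] is the Klein pole of the hyperplane [N(r) . P = 0]. *)
Lemma Nvec_klein_Nvec (a b : K) :
  (Nvec a *m klein_mx *m klein_mx *m (Nvec b *m klein_mx)^T) 0 0 = -2.
Proof.
rewrite -(mulmxA (Nvec a)) klein_mxK mulmx1 trmx_mul klein_mx_sym mulmxA.
by rewrite !(mxE, big_ord_recl, big_ord0) /=; ring.
Qed.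

Definition regulus_mx (L1 L2 L3 : 'M[K]_(2, 4)) : 'M[K]_(3, 6) :=
  \matrix_(i < 3) plucker (nth 0 [:: L1; L2; L3] i).

Lemma regulus_klein_mx L1 L2 L3 M1 M2 M3 :
  regulus_mx L1 L2 L3 *m klein_mx *m (regulus_mx M1 M2 M3)^T =
  \matrix_(i, j) \det (col_mx (nth 0 [:: L1; L2; L3] i) (nth 0 [:: M1; M2; M3] j)).
Proof. by apply/matrixP => i j; rewrite mulmx_trE !rowK plucker_klein_det mxE. Qed.

Lemma Nvec_klein_regulus (r : K) L1 L2 L3 :
  Nvec r *m klein_mx *m klein_mx *m (regulus_mx L1 L2 L3)^T =
  \row_i dot6 (Nvec r) (plucker (nth 0 [:: L1; L2; L3] i)).
Proof.
rewrite -(mulmxA (Nvec r)) klein_mxK mulmx1.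
by apply/rowP => i; rewrite !mxE; apply: eq_bigr => j _; rewrite !mxE.
Qed.

End Klein.

Section Regulus.
Variables (K : fieldType) (Q : 'M[K]_4) (R : 'M[K]_(2, 4) -> Prop).
Hypotheses (hR : ruling Q R) (h2 : (2 : K) != 0).

Lemma regulus_gram_unit L1 L2 L3 : R L1 -> R L2 -> R L3 ->
  ~ same_line L1 L2 -> ~ same_line L1 L3 -> ~ same_line L2 L3 ->
  regulus_mx L1 L2 L3 *m klein_mx *m (regulus_mx L1 L2 L3)^T \in unitmx.
Proof.
move=> RL1 RL2 RL3 n12 n13 n23.
have skew L M : R L -> R M -> ~ same_line L M -> \det (col_mx L M) != 0.
  by move=> RL RM nLM; apply/eqP => /(ruling_same_line hR RL RM).
apply: unitmx_hollow3 => //.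
- by rewrite !trmx_mul trmxK klein_mx_sym mulmxA.
- move=> i; rewrite regulus_klein_mx mxE.
  exact: det_col_mx_sub_eq0 (leq_ltn_trans (rank_leq_row _) _) (submx_refl _) (submx_refl _).
- by rewrite regulus_klein_mx mxE /= skew.
- by rewrite regulus_klein_mx mxE /= skew.
- by rewrite regulus_klein_mx mxE /= skew.
Qed.

End Regulus.

Lemma complementary_ruling_two_lines (K : fieldType) (Q : 'M[K]_4) R1 R2 (a b : K) :
  (2 : K) != 0 -> Q^T = Q -> Q != 0 -> ruling Q R1 -> ruling Q R2 -> complementary R1 R2 ->
  three_lines_of R1 a -> at_most_two_lines_of R2 b.
Proof.
move=> h2 sQ Q0 hR1 hR2 hc
  [L1 [L2 [L3 [[RL1 [_ cL1]] [RL2 [_ cL2]] [RL3 [_ cL3]] [n12 n13 n23]]]]].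
move=> M1 M2 M3 RM1 [_ cM1] RM2 [_ cM2] RM3 [_ cM3].
rewrite /same_line; apply/or3P/negPn/negP; rewrite !negb_or => /and3P [m12 m13 m23].
have cross : regulus_mx L1 L2 L3 *m klein_mx *m (regulus_mx M1 M2 M3)^T = 0.
  rewrite regulus_klein_mx; apply/matrixP => i j; rewrite !mxE.
  by apply: (complementary_rulings_meet h2 sQ Q0 hR1 hR2 hc); apply: forall_ord3.
have uA : Nvec a *m klein_mx *m klein_mx *m (regulus_mx L1 L2 L3)^T = 0.
  rewrite Nvec_klein_regulus; apply/rowP => i; rewrite !mxE.
  exact: (forall_ord3 (P := fun L => dot6 (Nvec a) (plucker L) = 0)).
have Bv : regulus_mx M1 M2 M3 *m klein_mx *m (Nvec b *m klein_mx)^T = 0.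
  apply: trmx_inj; rewrite !trmx_mul trmxK !klein_mx_sym mulmxA Nvec_klein_regulus trmx0.
  apply/rowP => i; rewrite !mxE.
  exact: (forall_ord3 (P := fun L => dot6 (Nvec b) (plucker L) = 0)).
have := form_eq0_of_orthogonal_sum (p := 3) (q := 3) klein_mx_sym
  (regulus_gram_unit hR1 h2 RL1 RL2 RL3 n12 n13 n23)
  (regulus_gram_unit hR2 h2 RM1 RM2 RM3 (negP m12) (negP m13) (negP m23)) cross uA Bv.
move=> /matrixP /(_ 0 0); rewrite Nvec_klein_Nvec mxE => /eqP.
by rewrite oppr_eq0 (negbTE h2).
Qed.

Theorem mainTheorem6 (F : fieldType) (Fbar : closedFieldType)
  (f : {rmorphism F -> Fbar}) (hchar : 2%N \notin [pchar F])
  (r1 r2 : F) (Q : 'M[Fbar]_4) (hS : doubly_ruled Q)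
  (R1 R2 : 'M[Fbar]_(2,4) -> Prop)
  (hR1 : ruling Q R1) (hR2 : ruling Q R2) (hcomp : complementary R1 R2) :
  (three_lines_of R1 (f r1) -> at_most_two_lines_of R2 (f r2)) /\
  (three_lines_of R1 (f r2) -> at_most_two_lines_of R2 (f r1)).
Proof.
have [[sQ Q0] _] := hS.
have h2F : (2 : F) != 0 by apply: contra hchar => h; rewrite inE /=.
have h2 : (2 : Fbar) != 0 by rewrite -(rmorph_nat f 2) fmorph_eq0.
by split; apply: (complementary_ruling_two_lines h2 sQ Q0 hR1 hR2 hcomp).
Qed.
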